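(* Let $r(x;m)$, $x\in\mathbb C^*$, $m=0,1,2,\ldots$, be functions satisfying $r(x;0)=1$ identically and $r(qx;m)=\sum_{i=0}^m(-1)^i\binom{m}{i}r(x;m-i)$ for all $x$ and $m$. For $n\ge1$ define $$R(t_1,\ldots,t_n\,|\,t_0)=\sum_{\gamma\in\Gamma_n}(-1)^{n+\ell(\gamma)}\prod_{k=1}^{\ell(\gamma)}r\Big(\prod_{i\in\upsilon(\gamma)_k}t_i\,;\,\#\gamma_k\Big),\qquad \upsilon(\gamma)_k=\{0\}\cup\gamma_1\cup\cdots\cup\gamma_{k-1}.$$ Then $$R(qt_1,t_2,\ldots,t_n\,|\,t_0)=\sum_{\pi\in\Pi^\circ_n}(-1)^{n+\ell(\pi)}R^\pi(t_1,\ldots,t_n\,|\,t_0),$$ where for $\pi=\{\pi_1,\ldots,\pi_\ell\}$, $R^\pi(t\,|\,t_0)=R\big(\prod_{k\in\pi_1}t_k,\ldots,\prod_{k\in\pi_\ell}t_k\,\big|\,t_0\big)$.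
   Context: $q$ is a fixed nonzero complex number and $t_0$ an auxiliary variable. $\Gamma_n$ is the set of compositions of $\{1,\ldots,n\}$: ordered tuples $\gamma=(\gamma_1,\ldots,\gamma_\ell)$ of nonempty, pairwise disjoint subsets with union $\{1,\ldots,n\}$; $\ell(\gamma)=\ell$. $\Pi_n$ is the set of (unordered) set partitions $\pi=\{\pi_1,\ldots,\pi_\ell\}$ of $\{1,\ldots,n\}$ into nonempty blocks, $\ell(\pi)=\ell$. $\Pi^\circ_n\subset\Pi_n$ consists of partitions having at most one block of cardinality $>1$, such a block (if present) containing $1$. ($R$ is symmetric in $t_1,\ldots,t_n$, so $R^\pi$ does not depend on the ordering of blocks.) *)

From HB Require Import structures.
From mathcomp Require Import all_boot all_order all_algebra.
From mathcomp Require Export complex.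
Set Implicit Arguments. Unset Strict Implicit. Unset Printing Implicit Defensive.
Import Order.TTheory GRing.Theory Num.Theory.
Local Open Scope ring_scope.

(* A composition of {0,..,n-1} (0-indexed version of {1,..,n}) of length l:
   an ordered l-tuple of nonempty, pairwise disjoint subsets covering everything. *)
Definition is_composition (n l : nat) (g : {ffun 'I_l -> {set 'I_n}}) : bool :=
  [&& [forall k, g k != set0],
      [forall j, forall k, (j != k) ==> [disjoint g j & g k]] &
      (\bigcup_(k < l) g k == [set: 'I_n])].

Section R.
Variable (C : fieldType) (r : C -> nat -> C).

(* R(t_1,...,t_n | t_0), with t_{i+1} = t i for i : 'I_n.
   The k-th block (0-indexed) contributes r(t_0 * prod_{i in g_0 u ... u g_{k-1}} t_i ; #g_k). *)
Definition Rfun (n : nat) (t : 'I_n -> C) (t0 : C) : C :=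
  \sum_(l < n.+1) \sum_(g : {ffun 'I_l -> {set 'I_n}} | is_composition g)
     (-1) ^+ (n + l) *
     \prod_(k < l) r (t0 * \prod_(i in \bigcup_(j < l | (j < k)%N) g j) t i) #|g k|.

Definition Rseq (ts : seq C) (t0 : C) : C :=
  Rfun (fun i : 'I_(size ts) => nth 0 ts i) t0.

(* Pi°_n : set partitions with at most one block of size > 1, such a block
   containing the first element (element 1 in the paper's indexing). *)
Definition is_circ_partition (n : nat) (P : {set {set 'I_n}}) : bool :=
  [&& partition P [set: 'I_n],
      #|[set B in P | (1 < #|B|)%N]| <= 1 &
      [forall B in P, (1 < #|B|)%N ==> [exists i in B, val i == 0%N]]]%N.

(* R^pi(t | t0): blocks listed in some (enumeration) order; R is symmetric. *)
Definition Rpi (n : nat) (P : {set {set 'I_n}}) (t : 'I_n -> C) (t0 : C) : C :=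
  Rseq [seq \prod_(k in B) t k | B : {set 'I_n} <- enum P] t0.
End R.

(* Write R_w(S | y) for the sum over compositions of a finite set S with point
   weights w, so that R(t_1,...,t_n | t_0) = R_t({1,...,n} | t_0).  Splitting
   off the first block gives, for S nonempty,
     sum_{B <= S} (-1)^|B| r(y; |B|) R_w(S \ B | y w(B)) = 0,
   and this triangular recursion together with R_w(empty | y) = 1 determines
   R_w.  Checking that candidate formulas satisfy the same recursion first
   gives, from the hypothesis on r and Moebius inversion on the lattice of
   subsets, R_w(S | q y) = sum_{A <= S} (-1)^|A| R_w(S \ A | y w(A)); a second
   application shows that multiplying the weight of a point a in S by q gives
   sum_{A <= S \ a} (-1)^|A| R_{w_A}(S \ A | y), where w_A multiplies the
   weight of a by w(A).  For S = {1,...,n} and a = 1 the term of A is R^pi for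
   the partition pi in Pi°_n whose large block is {1} u A, and the sign
   matches because n + l(pi) = |A| + 2 l(pi). *)

From HB Require Import structures.
From mathcomp Require Import all_boot all_order all_algebra.
From mathcomp Require Import complex.
From mathcomp Require Import ring.
Set Implicit Arguments. Unset Strict Implicit. Unset Printing Implicit Defensive.
Import Order.TTheory GRing.Theory Num.Theory.
Local Open Scope ring_scope.

Section FfunCons.
Variables (X : Type) (l : nat).

Definition ffun_cons (x : X) (h : {ffun 'I_l -> X}) : {ffun 'I_l.+1 -> X} :=
  [ffun i => if unlift ord0 i is Some j then h j else x].

Lemma ffun_cons0 x h : ffun_cons x h ord0 = x.
Proof. by rewrite ffunE unlift_none. Qed.

Lemma ffun_cons_lift x h j : ffun_cons x h (lift ord0 j) = h j.
Proof. by rewrite ffunE liftK. Qed.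

End FfunCons.

Lemma big_ffun_cons (R : Type) (idx : R) (op : Monoid.com_law idx)
    (X : finType) l (F : {ffun 'I_l.+1 -> X} -> R) :
  \big[op/idx]_g F g = \big[op/idx]_(x : X) \big[op/idx]_(h : {ffun 'I_l -> X}) F (ffun_cons x h).
Proof.
rewrite pair_big (reindex (fun p : X * {ffun 'I_l -> X} => ffun_cons p.1 p.2)) //=.
exists (fun g : {ffun 'I_l.+1 -> X} => (g ord0, [ffun j => g (lift ord0 j)])).
  move=> [x h] _ /=; rewrite ffun_cons0; congr pair.
  by apply/ffunP => j; rewrite ffunE ffun_cons_lift.
move=> g _; apply/ffunP => i; rewrite ffunE /=.
by case: unliftP => [j ->|->]; rewrite ?ffunE.
Qed.

Section SubsetSums.
Variable T : finType.
Implicit Types A B D S X Y : {set T}.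

Lemma setUD_subset A B : A \subset B -> A :|: (B :\: A) = B.
Proof. by move=> AB; rewrite setDE setUIr setUCr setIT; apply/setUidPr. Qed.

Lemma card_setD_lt B S : B \subset S -> B != set0 -> (#|S :\: B| < #|S|)%N.
Proof.
move=> BS B0; rewrite cardsDS // ltn_subrL !card_gt0 B0 /=.
by apply: contraNneq B0 => S0; rewrite -subset0 -S0.
Qed.

Lemma sum_subsets_card (V : nmodType) (f : nat -> V) B :
  \sum_(A : {set T} | A \subset B) f #|A| = \sum_(k < #|B|.+1) f k *+ 'C(#|B|, k).
Proof.
rewrite (partition_big (fun A : {set T} => (inord #|A| : 'I_#|B|.+1)) predT) //=.
apply: eq_bigr => k _.
rewrite (eq_bigr (fun _ => f k)); last first.
  by move=> A /andP[AB /eqP <-]; rewrite inordK // ltnS subset_leq_card.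
rewrite (eq_bigl (mem [set A : {set T} | A \subset B & #|A| == k])); last first.
  move=> A; rewrite !inE; case AB: (A \subset B) => //=.
  by rewrite -val_eqE /= inordK // ltnS subset_leq_card.
by rewrite sumr_const cards_draws.
Qed.

Lemma sum_subsets_sign (R : pzRingType) D :
  \sum_(A : {set T} | A \subset D) (-1) ^+ #|A| = (D == set0)%:R :> R.
Proof. by rewrite sum_subsets_card -exprD1n addNr expr0n cards_eq0. Qed.

Lemma sum_subsets_setD (V : nmodType) (F : {set T} -> V) D :
  \sum_(A : {set T} | A \subset D) F (D :\: A) = \sum_(A : {set T} | A \subset D) F A.
Proof.
have setDK A : A \subset D -> D :\: (D :\: A) = A.
  by move=> AD; rewrite setDDr setDv set0U; apply/setIidPr.
rewrite [RHS](reindex_onto (fun A => D :\: A) (fun A => D :\: A)) /=; last exact: setDK.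
apply: eq_bigl => A; rewrite subsetDl /=.
by apply/idP/eqP => [/setDK | <-] //; apply: subsetDl.
Qed.

Lemma sum_subsets_pairs (V : nmodType) X (F : {set T} -> {set T} -> V) :
  \sum_(B : {set T} | B \subset X) \sum_(A : {set T} | A \subset X :\: B) F B A =
  \sum_(D : {set T} | D \subset X) \sum_(B : {set T} | B \subset D) F B (D :\: B).
Proof.
rewrite [RHS](exchange_big_dep (fun B : {set T} => B \subset X)) /=; last first.
  by move=> D B DX BD; apply: subset_trans BD DX.
apply: eq_bigr => B BX.
rewrite [RHS](reindex_onto (fun A => B :|: A) (fun D => D :\: B)) /=; last first.
  by move=> D /andP[_ BD]; apply: setUD_subset.
apply: eq_big => [A|A].
  rewrite subsetD subUset subsetUl BX setDUl setDv set0U /= andbT.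
  by rewrite (sameP eqP (@setDidPl _ A B)).
rewrite subsetD => /andP[_ dAB].
by rewrite setDUl setDv set0U; move/setDidPl: dAB => ->.
Qed.

Lemma exchange_sum_subsetD (V : nmodType) X Y (F : {set T} -> {set T} -> V) :
  \sum_(B : {set T} | B \subset X) \sum_(A : {set T} | A \subset Y :\: B) F B A =
  \sum_(A : {set T} | A \subset Y) \sum_(B : {set T} | B \subset X :\: A) F B A.
Proof.
rewrite (exchange_big_dep (fun A : {set T} => A \subset Y)) /=; last first.
  by move=> B A _; rewrite subsetD => /andP[].
apply: eq_bigr => A AY; apply: eq_bigl => B.
by rewrite !subsetD AY /= disjoint_sym.
Qed.

End SubsetSums.

Lemma imsetD_inj (aT rT : finType) (f : aT -> rT) (A B : {set aT}) :
  injective f -> f @: (A :\: B) = f @: A :\: f @: B.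
Proof.
move=> injf; apply/setP => z; rewrite inE.
have [/codomP[x ->] | zf] := boolP (z \in codom f); first by rewrite !mem_imset // inE.
have notin X : z \in f @: X = false by apply: contraNF zf => /imsetP[x _ ->]; apply: codom_f.
by rewrite !notin.
Qed.

Lemma imsetS_inj (aT rT : finType) (f : aT -> rT) (A B : {set aT}) :
  injective f -> (f @: A \subset f @: B) = (A \subset B).
Proof.
move=> injf; apply/idP/idP => [/subsetP sAB | ]; last exact: imsetS.
by apply/subsetP => x xA; rewrite -(mem_imset _ _ injf) sAB // imset_f.
Qed.

Section Rset.
Variables (C : idomainType) (r : C -> nat -> C).

Section Compositions.
Variable T : finType.
Implicit Types (w : T -> C) (A B D S : {set T}) (y : C).

Definition weight w B : C := \prod_(i in B) w i.

Lemma weight0 w : weight w set0 = 1.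
Proof. exact: big_set0. Qed.

Lemma weightU w A B : [disjoint A & B] -> weight w (A :|: B) = weight w A * weight w B.
Proof. by move=> dAB; rewrite /weight -bigU //; apply: eq_bigl => i; rewrite !inE. Qed.

Lemma weight_neq0 w B : (forall i, w i != 0) -> weight w B != 0.
Proof. by move=> w_neq0; apply/prodf_neq0 => i _. Qed.

Definition composition_of S l (g : {ffun 'I_l -> {set T}}) : bool :=
  [&& [forall k, g k != set0],
      [forall j, forall k, (j != k) ==> [disjoint g j & g k]] &
      \bigcup_(k < l) g k == S].

Lemma composition_of_cons S l B (h : {ffun 'I_l -> {set T}}) :
  composition_of S (ffun_cons B h) =
  [&& B \subset S, B != set0 & composition_of (S :\: B) h].
Proof.
rewrite /composition_of big_ord_recl ffun_cons0.
under eq_bigr do rewrite ffun_cons_lift.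
apply/and3P/and3P => [[/forallP ne /forallP dis /eqP <-] | [BS B0 /and3P[]]].
  have disB j : [disjoint B & h j].
    by have /forallP/(_ (lift ord0 j)) := dis ord0; rewrite ffun_cons0 ffun_cons_lift neq_lift.
  split; [exact: subsetUl | by have := ne ord0; rewrite ffun_cons0 |].
  apply/and3P; split.
  - by apply/forallP => j; have := ne (lift ord0 j); rewrite ffun_cons_lift.
  - apply/forallP => j; apply/forallP => k; apply/implyP => jk.
    have /forallP/(_ (lift ord0 k)) := dis (lift ord0 j).
    by rewrite !ffun_cons_lift (inj_eq (@lift_inj _ ord0)) jk.
  - rewrite setDUl setDv set0U eq_sym; apply/eqP/setDidPl.
    by rewrite disjoint_sym; apply/bigcup_disjoint => j _.
move=> /forallP ne /forallP dis /eqP hS.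
have disB j : [disjoint B & h j].
  have : h j \subset S :\: B by rewrite -hS (bigcup_sup j).
  by rewrite subsetD disjoint_sym => /andP[].
split; last by rewrite hS setUD_subset.
  by apply/forallP => i; case: (unliftP ord0 i) => [j ->|->];
    rewrite ?ffun_cons_lift ?ffun_cons0.
apply/forallP => i; apply/forallP => k; apply/implyP.
case: (unliftP ord0 i) => [j ->|->]; case: (unliftP ord0 k) => [j' ->|->];
  rewrite ?ffun_cons_lift ?ffun_cons0 ?eqxx //; last by rewrite disjoint_sym.
by move=> jj'; apply: (implyP (forallP (dis j) j')); apply: contraNneq jj' => ->.
Qed.

Definition Rlen w l S y : C :=
  \sum_(g : {ffun 'I_l -> {set T}} | composition_of S g)
     \prod_(k < l) r (y * weight w (\bigcup_(j < l | (j < k)%N) g j)) #|g k|.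

Lemma Rlen0 w S y : Rlen w 0 S y = (S == set0)%:R.
Proof.
rewrite /Rlen (eq_bigl (fun _ => S == set0)); last first.
  move=> g; rewrite /composition_of big_ord0 eq_sym.
  have [-> ->] : [forall k, g k != set0] /\ [forall j, forall k, (j != k) ==> [disjoint g j & g k]].
    by split; apply/forallP => -[].
  by [].
case: (S == set0); last by rewrite big_pred0.
by rewrite (eq_bigr (fun _ => 1)) => [|g _]; rewrite ?big_ord0 // sumr_const card_ffun card_ord.
Qed.

Lemma RlenS w l S y :
  Rlen w l.+1 S y = \sum_(B : {set T} | (B \subset S) && (B != set0))
                      r y #|B| * Rlen w l (S :\: B) (y * weight w B).
Proof.
rewrite /Rlen big_mkcond big_ffun_cons [RHS]big_mkcond /=.
apply: eq_bigr => B _.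
case: ifP => BS0; under eq_bigr do rewrite composition_of_cons andbA BS0 /=; last by rewrite big1.
rewrite mulr_sumr [RHS]big_mkcond; apply: eq_bigr => h _; case: ifP => // /and3P[_ _ /eqP hS].
rewrite big_ord_recl ffun_cons0 big_pred0 // weight0 mulr1; congr (_ * _).
apply: eq_bigr => k _; rewrite ffun_cons_lift.
have -> : \bigcup_(j < l.+1 | (j < lift ord0 k)%N) ffun_cons B h j =
          B :|: \bigcup_(j < l | (j < k)%N) h j.
  rewrite big_mkcond big_ord_recl ffun_cons0 [in RHS]big_mkcond; congr (_ :|: _).
  by apply: eq_bigr => j _; rewrite ffun_cons_lift.
rewrite weightU ?mulrA //; apply/bigcup_disjoint => j _.
have : h j \subset S :\: B by rewrite -hS (bigcup_sup j).
by rewrite subsetD disjoint_sym => /andP[].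
Qed.

Lemma Rlen_eq0 w l S y : (#|S| < l)%N -> Rlen w l S y = 0.
Proof.
elim: l S y => [//|l IHl] S y ltSl.
rewrite RlenS big1 // => B /andP[BS B0]; rewrite IHl ?mulr0 //.
by apply: leq_trans (card_setD_lt BS B0) _; rewrite -ltnS.
Qed.

Definition Rset w S y : C := \sum_(l < #|S|.+1) (-1) ^+ (#|S| + l) * Rlen w l S y.

Lemma Rset_widen w S y N : (#|S| < N)%N ->
  Rset w S y = \sum_(l < N) (-1) ^+ (#|S| + l) * Rlen w l S y.
Proof.
move=> ltSN; rewrite /Rset (big_ord_widen N (fun l => (-1) ^+ (#|S| + l) * Rlen w l S y) ltSN).
rewrite big_mkcond; apply: eq_bigr => l _; case: ifP => // /negbT.
by rewrite -leqNgt => ltSl; rewrite Rlen_eq0 ?mulr0.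
Qed.

Lemma Rset0 w y : Rset w set0 y = 1.
Proof. by rewrite /Rset cards0 big_ord1 Rlen0 eqxx mulr1. Qed.

Definition signed_r B y : C := (-1) ^+ #|B| * r y #|B|.

Lemma Rset_rec w S y : S != set0 ->
  Rset w S y = - \sum_(B : {set T} | (B \subset S) && (B != set0))
                    signed_r B y * Rset w (S :\: B) (y * weight w B).
Proof.
move=> S0; rewrite {1}/Rset big_ord_recl Rlen0 (negbTE S0) mulr0 add0r.
under eq_bigr do rewrite RlenS mulr_sumr.
rewrite exchange_big /= -sumrN; apply: eq_bigr => B /andP[BS B0].
rewrite (Rset_widen _ _ (card_setD_lt BS B0)) mulr_sumr -sumrN; apply: eq_bigr => l _.
have cardS : #|S| = (#|B| + #|S :\: B|)%N by rewrite cardsDS // subnKC // subset_leq_card.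
have -> : (-1) ^+ (#|S| + bump 0 l) = (-1) ^+ (#|B| + #|S :\: B| + l.+1) :> C by rewrite -cardS.
rewrite /signed_r !exprD exprS; ring.
Qed.

Definition subset_conv w (k F : {set T} -> C -> C) S y : C :=
  \sum_(B : {set T} | B \subset S) k B y * F (S :\: B) (y * weight w B).

Lemma subset_conv_set0 w k F S y :
  subset_conv w k F S y = k set0 y * F S y +
    \sum_(B : {set T} | (B \subset S) && (B != set0)) k B y * F (S :\: B) (y * weight w B).
Proof. by rewrite /subset_conv (bigD1 set0) ?sub0set //= setD0 weight0 mulr1. Qed.

Lemma Rset_conv_eq0 w S y : r y 0 = 1 -> S != set0 ->
  subset_conv w signed_r (Rset w) S y = 0.
Proof.
move=> ry0 S0; rewrite subset_conv_set0 /signed_r cards0 ry0 mulr1 mul1r.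
by rewrite [X in X + _]Rset_rec // addNr.
Qed.

Lemma subset_conv_uniq w k F1 F2 :
    (forall i, w i != 0) -> (forall y, y != 0 -> k set0 y = 1) ->
    (forall y, y != 0 -> F1 set0 y = F2 set0 y) ->
    (forall S y, y != 0 -> S != set0 -> subset_conv w k F1 S y = 0) ->
    (forall S y, y != 0 -> S != set0 -> subset_conv w k F2 S y = 0) ->
  forall S y, y != 0 -> F1 S y = F2 S y.
Proof.
move=> w_neq0 k0 F0 F1rec F2rec.
have solve F S y : y != 0 -> subset_conv w k F S y = 0 -> F S y =
    - \sum_(B : {set T} | (B \subset S) && (B != set0)) k B y * F (S :\: B) (y * weight w B).
  by move=> y0; rewrite subset_conv_set0 k0 // mul1r => /eqP; rewrite addr_eq0 => /eqP.
move=> S; elim: {S}#|S| {-2}S (leqnn #|S|) => [|m IHm] S leSm y y0.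
  by move: leSm; rewrite leqn0 cards_eq0 => /eqP ->; apply: F0.
have [-> | S0] := eqVneq S set0; first exact: F0.
rewrite (solve _ _ _ y0 (F1rec _ _ y0 S0)) (solve _ _ _ y0 (F2rec _ _ y0 S0)).
congr (- _); apply: eq_bigr => B /andP[BS B0]; rewrite IHm ?mulf_neq0 ?weight_neq0 //.
by rewrite -ltnS (leq_trans (card_setD_lt BS B0)).
Qed.

Definition kernel_mul w (k1 k2 : {set T} -> C -> C) D y : C :=
  \sum_(B : {set T} | B \subset D) k1 B y * k2 (D :\: B) (y * weight w B).

Lemma subset_convA w k1 k2 F S y :
  subset_conv w k1 (subset_conv w k2 F) S y = subset_conv w (kernel_mul w k1 k2) F S y.
Proof.
rewrite /subset_conv /kernel_mul; under eq_bigr do rewrite mulr_sumr.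
rewrite sum_subsets_pairs; apply: eq_bigr => D DS; rewrite mulr_suml.
apply: eq_bigr => B BD.
have dB : [disjoint B & D :\: B] by rewrite disjoints_subset setCD subsetUr.
by rewrite setDDl setUD_subset // -mulrA -weightU // setUD_subset // mulrA.
Qed.

Lemma subset_conv_mobius w F S y :
  subset_conv w (fun _ _ => 1) (subset_conv w (fun A _ => (-1) ^+ #|A|) F) S y = F S y.
Proof.
have delta D : kernel_mul w (fun _ _ => 1) (fun A _ => (-1) ^+ #|A|) D y = (D == set0)%:R.
  rewrite /kernel_mul; under eq_bigr do rewrite mul1r.
  by rewrite (sum_subsets_setD (fun A => (-1) ^+ #|A|)) sum_subsets_sign.
rewrite subset_convA subset_conv_set0 delta eqxx mul1r big1 ?addr0 // => D /andP[_ D0].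
by rewrite delta (negbTE D0) mul0r.
Qed.

Lemma Rset_local w w' S y : {in S, w =1 w'} -> Rset w S y = Rset w' S y.
Proof.
move=> eq_w; apply: eq_bigr => l _; congr (_ * _); apply: eq_bigr => g /and3P[_ _ /eqP gS].
apply: eq_bigr => k _; congr (r (y * _) _); apply: eq_bigr => i /bigcupP[j _ ij].
by apply: eq_w; rewrite -gS; apply/bigcupP; exists j.
Qed.

Definition scale_at a c w : T -> C := fun i => if i == a then c * w i else w i.

Lemma scale_at_neq0 a c w : c != 0 -> (forall i, w i != 0) -> forall i, scale_at a c w i != 0.
Proof.
by move=> c0 w_neq0 i; rewrite /scale_at; case: ifP; rewrite ?mulf_eq0 ?negb_or ?c0 ?w_neq0.
Qed.

Lemma scale_at_out a c w i : i != a -> scale_at a c w i = w i.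
Proof. by rewrite /scale_at => /negbTE ->. Qed.

Lemma weight_scale_at_in a c w B : a \in B -> weight (scale_at a c w) B = c * weight w B.
Proof.
move=> aB; rewrite /weight !(bigD1 a aB) /= {1}/scale_at eqxx -mulrA; congr (_ * (_ * _)).
by apply: eq_bigr => i /andP[_]; apply: scale_at_out.
Qed.

Lemma weight_scale_at_out a c w B : a \notin B -> weight (scale_at a c w) B = weight w B.
Proof. by move=> aB; apply: eq_bigr => i iB; apply: scale_at_out; apply: contraNneq aB => <-. Qed.

Lemma Rset_scale_at_out a c w S y : a \notin S -> Rset (scale_at a c w) S y = Rset w S y.
Proof.
by move=> aS; apply: Rset_local => i iS; apply: scale_at_out; apply: contraNneq aS => <-.
Qed.

End Compositions.

Hypothesis r0 : forall x, x != 0 -> r x 0 = 1.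

Lemma signed_r_set0 (T : finType) y : y != 0 -> signed_r (set0 : {set T}) y = 1.
Proof. by move=> y0; rewrite /signed_r cards0 mul1r r0. Qed.

Lemma Rset_imset (T1 T2 : finType) (f : T1 -> T2) (w : T2 -> C) S y :
  injective f -> (forall i, w i != 0) -> y != 0 -> Rset (w \o f) S y = Rset w (f @: S) y.
Proof.
move=> injf w_neq0; move: S y.
apply: (subset_conv_uniq (w := w \o f) (k := signed_r (T:=T1)) (F2 := fun S y => Rset w (f @: S) y))
  => [i|||S y y0 S0|S y y0 S0].
- exact: w_neq0.
- exact: signed_r_set0.
- by move=> y _; rewrite imset0 !Rset0.
- exact: Rset_conv_eq0 (r0 y0) S0.
have imK (B' : {set T2}) : B' \subset f @: S -> f @: (f @^-1: B') = B'.
  move=> B'S; apply/setP => z; apply/imsetP/idP => [[x]|zB']; first by rewrite inE => ? ->.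
  by case/imsetP: (subsetP B'S z zB') => x _ zfx; exists x; rewrite // inE -zfx.
rewrite -(Rset_conv_eq0 w (r0 y0) (_ : f @: S != set0)) ?imset_eq0 //.
rewrite /subset_conv [RHS](reindex_onto (fun B : {set T1} => f @: B) _ imK) /=.
apply: eq_big => [B | B _].
  have -> : f @^-1: (f @: B) = B by apply/setP => x; rewrite inE mem_imset.
  by rewrite eqxx andbT imsetS_inj.
rewrite /signed_r card_imset // imsetD_inj //; congr (_ * Rset _ _ (y * _)).
by rewrite /weight big_imset //; apply: in2W.
Qed.

Variable q : C.
Hypothesis q0 : q != 0.
Hypothesis rq : forall x m, x != 0 ->
  r (q * x) m = \sum_(i < m.+1) (-1) ^+ i * 'C(m, i)%:R * r x (m - i).

Variable T : finType.
Implicit Types (w : T -> C) (a : T) (A B S : {set T}) (y : C).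

Lemma signed_r_shift B y : y != 0 ->
  signed_r B (q * y) = \sum_(A : {set T} | A \subset B) signed_r A y.
Proof.
move=> y0; rewrite /signed_r rq // (sum_subsets_card (fun k => (-1) ^+ k * r y k)).
rewrite mulr_sumr (reindex_inj rev_ord_inj) /=; apply: eq_bigr => i _.
have le_iB : (i <= #|B|)%N by rewrite -ltnS.
rewrite subSS subKn // bin_sub // -{1}(subnK le_iB) exprD.
set s := (-1) ^+ (#|B| - i).
transitivity (s * s * ((-1) ^+ i * r y i *+ 'C(#|B|, i))); first by rewrite -mulr_natr; ring.
by rewrite -expr2 sqrr_sign mul1r.
Qed.

Lemma Rset_shift w S y : (forall i, w i != 0) -> y != 0 ->
  Rset w S (q * y) = subset_conv w (fun A _ => (-1) ^+ #|A|) (Rset w) S y.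
Proof.
move=> w_neq0; move: S y.
apply: (subset_conv_uniq (k := fun B y => signed_r B (q * y)) (F1 := fun S y => Rset w S (q * y)))
  => [|y y0|y _|S y y0 S0|S y y0 S0] //.
- by apply: signed_r_set0; rewrite mulf_neq0.
- rewrite Rset0 /subset_conv (big_pred1 set0) => [|B]; last by rewrite subset0.
  by rewrite cards0 setD0 Rset0 mulr1.
- rewrite -(Rset_conv_eq0 w (r0 (mulf_neq0 q0 y0)) S0).
  by apply: eq_bigr => B _; rewrite mulrA.
transitivity (subset_conv w (kernel_mul w (signed_r (T:=T)) (fun _ _ => 1))
                (subset_conv w (fun A _ => (-1) ^+ #|A|) (Rset w)) S y).
  apply: eq_bigr => B _; rewrite signed_r_shift //; congr (_ * _).
  by apply: eq_bigr => A _; rewrite mulr1.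
rewrite -subset_convA -(Rset_conv_eq0 w (r0 y0) S0).
by apply: eq_bigr => B _; rewrite subset_conv_mobius.
Qed.

Definition Rset_expand_at a w S y : C :=
  if a \in S then
    \sum_(A : {set T} | A \subset S :\ a)
       (-1) ^+ #|A| * Rset (scale_at a (weight w A) w) (S :\: A) y
  else Rset w S y.

Lemma Rset_expand_at_setD w a S B y : (forall i, w i != 0) -> y != 0 -> a \in S -> B \subset S ->
  Rset_expand_at a w (S :\: B) (y * weight (scale_at a q w) B) =
  \sum_(A : {set T} | A \subset (S :\ a) :\: B) (-1) ^+ #|A| *
     Rset (scale_at a (weight w A) w) (S :\: A :\: B) (y * weight (scale_at a (weight w A) w) B).
Proof.
move=> w_neq0 y0 aS BS; rewrite /Rset_expand_at inE aS andbT.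
have [aB | aB] /= := boolP (a \in B); last first.
  rewrite setDDl setUC -setDDl; apply: eq_bigr => A _.
  by rewrite !weight_scale_at_out // !setDDl setUC.
rewrite weight_scale_at_in // mulrCA Rset_shift ?mulf_neq0 ?weight_neq0 //.
apply: eq_big => [A | A _]; first by rewrite setDDl (setUidPr _) // sub1set.
rewrite weight_scale_at_in // Rset_scale_at_out; last by rewrite !inE aB.
by rewrite !setDDl (setUC A) mulrA (mulrAC y).
Qed.

Lemma Rset_scale_at w a S y : (forall i, w i != 0) -> y != 0 ->
  Rset (scale_at a q w) S y = Rset_expand_at a w S y.
Proof.
move=> w_neq0; move: S y.
apply: (subset_conv_uniq (w := scale_at a q w) (k := signed_r (T:=T)) (F2 := Rset_expand_at a w))
  => [|||S y y0 S0|S y y0 S0].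
- exact: scale_at_neq0.
- exact: signed_r_set0.
- by move=> y _; rewrite /Rset_expand_at inE !Rset0.
- exact: Rset_conv_eq0 (r0 y0) S0.
have [aS | aS] := boolP (a \in S); last first.
  rewrite -(Rset_conv_eq0 w (r0 y0) S0); apply: eq_bigr => B BS.
  have aB : a \notin B by apply: contra aS; apply: (subsetP BS).
  by rewrite /Rset_expand_at inE (negbTE aS) andbF weight_scale_at_out.
rewrite /subset_conv; under eq_bigr => B BS do rewrite Rset_expand_at_setD // mulr_sumr.
rewrite exchange_sum_subsetD big1 // => A; rewrite subsetD1 => /andP[AS aA].
have SA0 : S :\: A != set0 by apply/set0Pn; exists a; rewrite inE aA.
have := Rset_conv_eq0 (scale_at a (weight w A) w) (r0 y0) SA0; rewrite /subset_conv => conv0.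
by under eq_bigr do rewrite mulrCA; rewrite -mulr_sumr conv0 mulr0.
Qed.

End Rset.

Lemma Rfun_Rset (C : fieldType) (r : C -> nat -> C) n (t : 'I_n -> C) t0 :
  Rfun r t t0 = Rset r t [set: 'I_n] t0.
Proof. by rewrite /Rfun /Rset cardsT card_ord; apply: eq_bigr => l _; rewrite mulr_sumr. Qed.

Lemma Rpi_Rset (C : fieldType) (r : C -> nat -> C) n (P : {set {set 'I_n}}) (t : 'I_n -> C) t0 :
    (forall x, x != 0 -> r x 0 = 1) -> (forall i, t i != 0) -> t0 != 0 ->
  Rpi r P t t0 = Rset r (weight t) P t0.
Proof.
move=> r0 t_neq0 t00; rewrite /Rpi /Rseq Rfun_Rset.
set s := map _ _.
have lt_iP (i : 'I_(size s)) : (i < size (enum P))%N by rewrite -(size_map (weight t)) ltn_ord.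
pose block (i : 'I_(size s)) := nth set0 (enum P) i.
have block_inj : injective block.
  by move=> i j /eqP; rewrite nth_uniq ?lt_iP ?enum_uniq // => /eqP; apply: val_inj.
rewrite (Rset_local r (w' := weight t \o block)) => [|i _]; last by rewrite /s (nth_map set0).
rewrite Rset_imset // => [|B]; last exact: weight_neq0.
congr (Rset r _ _ t0); apply/setP => B; apply/imsetP/idP => [[i _ ->] | PB].
  by rewrite -mem_enum mem_nth.
have lt_Bs : (index B (enum P) < size s)%N by rewrite size_map index_mem mem_enum.
by exists (Ordinal lt_Bs); rewrite /block ?inE //= nth_index ?mem_enum.
Qed.

Section CircPartition.
Variables (n : nat) (a : 'I_n).
Hypothesis a0 : val a = 0%N.
Implicit Types (A B : {set 'I_n}) (P : {set {set 'I_n}}).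

Definition circ_block A x : {set 'I_n} := if x == a then a |: A else [set x].

Definition circ_partition A : {set {set 'I_n}} := circ_block A @: ~: A.

Lemma mem_circ_block A x : x \in circ_block A x.
Proof. by rewrite /circ_block; case: eqP => [->|_]; rewrite !inE eqxx. Qed.

Lemma circ_block_inj A : injective (circ_block A).
Proof.
move=> x y; rewrite /circ_block.
case: eqP => [->|xa]; case: eqP => [->|ya] //; last exact: set1_inj.
  by move=> E; have := setU11 a A; rewrite E inE => /eqP ay; case: ya.
by move=> E; have := setU11 a A; rewrite -E inE => /eqP ax; case: xa.
Qed.

Lemma circ_partition_partition A : a \notin A -> partition (circ_partition A) [set: 'I_n].
Proof.
move=> aA; apply/and3P; split.
- rewrite cover_imset; apply/eqP/setP => z; rewrite inE; apply/bigcupP.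
  have [zA | zA] := boolP (z \in A); last by exists z; rewrite ?inE ?zA ?mem_circ_block.
  by exists a; rewrite /circ_block ?eqxx !inE ?zA ?orbT.
- apply/trivIsetP => _ _ /imsetP[x xA ->] /imsetP[y yA ->] neq.
  have xy : x != y by apply: contraNneq neq => ->.
  rewrite !inE in xA yA; rewrite /circ_block.
  case: eqP => [xa|xa]; case: eqP => [ya|ya].
  + by case/eqP: xy; rewrite xa ya.
  + by rewrite disjoint_sym disjoints1 !inE (negbTE yA) orbF; apply/eqP.
  + by rewrite disjoints1 !inE (negbTE xA) orbF; apply/eqP.
  + by rewrite disjoints1 inE.
- by apply/imsetP => -[x _ x0]; have := mem_circ_block A x; rewrite -x0 inE.
Qed.

Lemma val_eq0 (i : 'I_n) : (val i == 0%N) = (i == a).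
Proof. by rewrite -a0 val_eqE. Qed.

Lemma circ_partitionP A : a \notin A -> is_circ_partition (circ_partition A).
Proof.
move=> aA; apply/and3P; split; first exact: circ_partition_partition.
- apply: (@leq_trans #|[set a |: A]|); last by rewrite cards1.
  apply/subset_leq_card/subsetP => B; rewrite !inE => /andP[/imsetP[x _ ->]].
  by rewrite /circ_block; case: eqP => // _; rewrite cards1.
- apply/forall_inP => _ /imsetP[x _ ->]; apply/implyP; rewrite /circ_block.
  case: eqP => [_ _ | _]; last by rewrite cards1.
  by apply/exists_inP; exists a; rewrite ?val_eq0 ?setU11.
Qed.

Lemma circ_partition_pblock A : a \notin A -> pblock (circ_partition A) a :\ a = A.
Proof.
move=> aA; have /and3P[_ tI _] := circ_partition_partition aA.
have aCA : a \in ~: A by rewrite inE.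
by rewrite (def_pblock tI (imset_f _ aCA) (mem_circ_block A a)) /circ_block eqxx setU1K.
Qed.

Lemma circ_partition_card1 P B : is_circ_partition P -> B \in P -> a \notin B -> #|B| == 1%N.
Proof.
case/and3P => /and3P[_ _ P0] _ /forall_inP big_a PB aB.
rewrite eqn_leq card_gt0 andbC; have -> : B != set0 by apply: contraNneq P0 => <-.
rewrite leqNgt; apply/negP => /(implyP (big_a B PB))/exists_inP[i iB].
by rewrite val_eq0 => /eqP ia; rewrite -ia iB in aB.
Qed.

Lemma circ_partitionK P : is_circ_partition P -> circ_partition (pblock P a :\ a) = P.
Proof.
move=> circP; have /and3P[/and3P[/eqP coverP tIP _] _ _] := circP.
have coverT x : x \in cover P by rewrite coverP inE.
set A := pblock P a :\ a.
have notin_A x : x != a -> (x \notin A) = (pblock P x != pblock P a).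
  move=> xa; rewrite !inE xa /=; apply/negb_inj; rewrite !negbK.
  apply/idP/eqP => [xPa | <-]; last by rewrite mem_pblock coverT.
  exact: def_pblock (pblock_mem (coverT a)) xPa.
apply/setP => B; apply/imsetP/idP => [[x xA ->] | PB].
  rewrite /circ_block; case: eqP => [_ | /eqP xa]; first by rewrite setD1K ?mem_pblock ?pblock_mem.
  rewrite inE notin_A // in xA.
  have aPx : a \notin pblock P x.
    by apply: contra xA => aPx; rewrite (def_pblock tIP (pblock_mem (coverT x)) aPx).
  have /cards1P[y Pxy] := circ_partition_card1 circP (pblock_mem (coverT x)) aPx.
  have := mem_pblock P x; rewrite coverT Pxy inE => /eqP xy.
  by rewrite xy -Pxy pblock_mem.
have [aB | aB] := boolP (a \in B).
  exists a; first by rewrite !inE eqxx.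
  by rewrite /circ_block eqxx setD1K ?(def_pblock tIP PB aB).
have /cards1P[x Bx] := circ_partition_card1 circP PB aB.
have xB : x \in B by rewrite Bx set11.
have xa : x != a by apply: contraNneq aB => <-.
exists x; last by rewrite /circ_block (negbTE xa).
rewrite inE notin_A // (def_pblock tIP PB xB).
by apply: contraNneq aB => ->; rewrite mem_pblock coverT.
Qed.

End CircPartition.

Theorem theorem10p1 (R : rcfType) (q : R[i]) (r : R[i] -> nat -> R[i])
  (hq : q != 0)
  (hr0 : forall x : R[i], x != 0 -> r x 0%N = 1)
  (hrq : forall (x : R[i]) (m : nat), x != 0 ->
     r (q * x) m = \sum_(i < m.+1) (-1) ^+ i * ('C(m, i))%:R * r x (m - i)%N)
  (n : nat) (hn : (0 < n)%N) (t : 'I_n -> R[i]) (t0 : R[i])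
  (ht : forall i, t i != 0) (ht0 : t0 != 0) :
  Rfun r (fun i : 'I_n => if val i == 0%N then q * t i else t i) t0 =
  \sum_(P : {set {set 'I_n}} | is_circ_partition P)
     (-1) ^+ (n + #|P|) * Rpi r P t t0.
Proof.
pose a := Ordinal hn.
rewrite Rfun_Rset (Rset_local r (w' := scale_at a q t)) => [|i _]; last first.
  by rewrite /scale_at (val_eq0 (erefl : val a = 0%N)).
rewrite (Rset_scale_at hr0 hq hrq) // /Rset_expand_at inE.
rewrite [RHS](reindex_onto (circ_partition a) (fun P => pblock P a :\ a)) /=; last first.
  by move=> P; apply: circ_partitionK.
apply: eq_big => [A | A]; rewrite subsetD1 subsetT /=.
  apply/idP/andP => [aA | [_ /eqP <-]]; last by rewrite setD11.
  by split; [exact: circ_partitionP | rewrite circ_partition_pblock].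
move=> aA; have block_inj : injective (circ_block a A) by exact: circ_block_inj.
rewrite Rpi_Rset // -Rset_imset // => [|B]; last exact: weight_neq0.
rewrite card_imset //.
have -> : (n + #|~: A|)%N = (#|A| + #|~: A|.*2)%N by rewrite -addnn addnA cardsC card_ord.
rewrite exprD -muln2 exprM sqrr_sign mulr1 setTD; congr (_ * _); apply: Rset_local => x _.
rewrite /scale_at /circ_block /=; case: eqP => [-> | _]; last by rewrite /weight big_set1.
by rewrite /weight big_setU1 // mulrC.
Qed.
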